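(* Let $0\le a<b<1$ and let $\varrho\ge0$ be a bounded function on $[a,b]$ such that $\varrho/\zeta$ is non-decreasing on $[a,b]$. Then (i) $m(\varrho/\zeta,a,b)\le(\varrho/\zeta)(b-)+m(a,b)$, where $(\varrho/\zeta)(b-)=\lim_{t\uparrow b}\varrho(t)/\zeta(t)$; (ii) equality holds in (i) if and only if $\varrho\equiv0$ on $[a,b)$.
   Context: $\zeta(t)=\frac{2}{1-t^2}$ on $[0,1)$. With $h$ a primitive of $\varrho$ on $[a,b]$, $\psi=e^h$, $\mathtt f(x)=x\zeta(x)^2\psi(x)$, $\mathtt g(x)=x\zeta(x)\psi(x)$, define $m(\varrho/\zeta,a,b):=\frac{\mathtt g(b)-\mathtt g(a)}{\int_a^b\mathtt f\,dt}$, and $m(a,b):=m(0,a,b)=\frac{b\zeta(b)-a\zeta(a)}{\zeta(b)-\zeta(a)}=\frac{1+ab}{a+b}$ (the value for $\varrho\equiv0$). *)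

From Stdlib Require Import Reals ClassicalEpsilon.
Open Scope R_scope.

Definition zeta (t : R) : R := 2 / (1 - t ^ 2).

(* Total Riemann integral: RiemannInt of f on [a,b] when f is Riemann
   integrable there (value independent of the proof), 0 otherwise. *)
Definition Rint (f : R -> R) (a b : R) : R :=
  match excluded_middle_informative (inhabited (Riemann_integrable f a b)) with
  | left H => RiemannInt (epsilon H (fun _ => True))
  | right _ => 0
  end.

(* With h a primitive of rho on [a,b], psi = e^h,
   f(x) = x zeta(x)^2 psi(x), g(x) = x zeta(x) psi(x),
   m(rho/zeta,a,b) = (g b - g a) / int_a^b f. *)
Definition m_rho (h : R -> R) (a b : R) : R :=
  let psi := fun x => exp (h x) in
  let f := fun x => x * zeta x ^ 2 * psi x in
  let g := fun x => x * zeta x * psi x in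
  (g b - g a) / Rint f a b.

Definition m0 (a b : R) : R :=
  (b * zeta b - a * zeta a) / (zeta b - zeta a).

From Stdlib Require Import Reals Lra Lia ClassicalEpsilon.
From Coquelicot Require Import Coquelicot.
Open Scope R_scope.

(* With [psi = exp (c + int_a^x rho)], [m(rho/zeta, a, b)] is [[x zeta psi]_a^b / D] where
   [D = int_a^b zeta' psi] and [zeta' = x zeta^2]. Two estimates bound the numerator.

   First, [rho <= L zeta] on [[a, b)] (monotonicity of [rho/zeta] and the limit [L]), so
   [psi = exp (L Z) Q] with [Z' = zeta] and [Q] nonincreasing. As
   [(x zeta exp (L Z))' = ((x zeta)' + L zeta') exp (L Z)], replacing [Q] by [Q b] gives
   [[x zeta psi]_a^b <= int_a^b ((x zeta)' + L zeta') psi].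

   Second, [k = (x zeta)' - m(a,b) zeta'] has integral zero over [[a, b]] (this is the
   definition of [m(a,b)]) and changes sign once, at a root [x0] of [t^2 - 2 m(a,b) t + 1].
   Since [psi] is nondecreasing, [int k psi = int k (psi - psi x0) <= 0], strictly as soon as
   [rho] is positive somewhere on [[a, b)], because [psi] then increases strictly near [b].

   All integrands are nondecreasing, hence Riemann integrable. *)

Definition nondecreasing_on (f : R -> R) (a b : R) : Prop :=
  forall x y, a <= x -> x <= y -> y <= b -> f x <= f y.

Lemma IsStepFun_const_open (F : R -> R) x y c :
  x <= y -> (forall t, x < t < y -> F t = c) ->
  { pr : IsStepFun F x y | RiemannInt_SF (mkStepFun pr) = c * (y - x) }.
Proof.
  intros Hxy HF.
  assert (Hac : adapted_couple F x y (x :: y :: nil)%list (c :: nil)%list).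
  { repeat split.
    - intros i Hi; simpl in Hi. destruct i; [simpl; lra | lia].
    - simpl; rewrite Rmin_left; auto.
    - simpl; rewrite Rmax_right; auto.
    - intros i Hi; simpl in Hi. destruct i; [|lia].
      intros t Ht; simpl in Ht |- *; apply HF; unfold open_interval in Ht; lra. }
  exists (existT _ (x :: y :: nil)%list (existT _ (c :: nil)%list Hac)).
  unfold RiemannInt_SF; simpl.
  destruct (Rle_dec x y); [simpl; ring | contradiction].
Qed.

Definition grid (a d : R) (k : nat) : R := a + INR k * d.

Fixpoint grid_step (a d : R) (g : nat -> R) (n : nat) (t : R) : R :=
  match n with
  | O => g O
  | S n' => if Rlt_dec t (grid a d n') then grid_step a d g n' t else g n'
  end.

Fixpoint sum_lt (g : nat -> R) (k : nat) : R :=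
  match k with O => 0 | S k' => sum_lt g k' + g k' end.

Section Grid.

Variables (a d : R) (g : nat -> R).
Hypothesis Hd : 0 < d.

Lemma grid_le j k : (j <= k)%nat -> grid a d j <= grid a d k.
Proof. intros H; unfold grid. apply le_INR in H. nra. Qed.

Lemma grid_step_eq n j t :
  (j < n)%nat -> grid a d j <= t < grid a d (S j) -> grid_step a d g n t = g j.
Proof.
  induction n as [|n IH]; intros Hj Ht; [lia|].
  simpl. destruct (Rlt_dec t (grid a d n)) as [Hl|Hl].
  - assert (j <> n) by (intro; subst; lra).
    apply IH; [lia | exact Ht].
  - enough (j = n) by (subst; reflexivity).
    destruct (Nat.eq_dec j n) as [E|E]; [exact E|].
    pose proof (grid_le (S j) n ltac:(lia)). lra.
Qed.

Lemma grid_step_last n t : grid a d n <= t -> grid_step a d g (S n) t = g n.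
Proof. intros H; simpl. destruct (Rlt_dec t (grid a d n)); [lra | reflexivity]. Qed.

Lemma grid_cell n t :
  grid a d 0 <= t < grid a d n -> exists j, (j < n)%nat /\ grid a d j <= t < grid a d (S j).
Proof.
  induction n as [|n IH]; intros Ht; [lra|].
  destruct (Rlt_dec t (grid a d n)) as [Hl|Hl].
  - destruct (IH ltac:(lra)) as [j [Hj Hjt]]. exists j; split; [lia | exact Hjt].
  - exists n; split; [lia | lra].
Qed.

Lemma grid_step_SF n k : (k <= n)%nat ->
  { pr : IsStepFun (grid_step a d g n) (grid a d 0) (grid a d k) |
    RiemannInt_SF (mkStepFun pr) = d * sum_lt g k }.
Proof.
  induction k as [|k IH]; intros Hk.
  - destruct (IsStepFun_const_open (grid_step a d g n) (grid a d 0) (grid a d 0) 0)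
      as [pr Hpr]; [lra | intros; lra |].
    exists pr. rewrite Hpr. simpl. ring.
  - destruct (IH ltac:(lia)) as [pr1 H1].
    destruct (IsStepFun_const_open (grid_step a d g n) (grid a d k) (grid a d (S k)) (g k))
      as [pr2 H2].
    + apply grid_le; lia.
    + intros t Ht. apply grid_step_eq; [lia | lra].
    + exists (StepFun_P46 pr1 pr2).
      rewrite <- (StepFun_P43 pr1 pr2 (StepFun_P46 pr1 pr2)), H1, H2.
      unfold grid. rewrite S_INR. simpl. ring.
Qed.

End Grid.

Lemma grid_step_oscillation (f : R -> R) a d n t : 0 < d -> (0 < n)%nat ->
  nondecreasing_on f a (grid a d n) -> a <= t <= grid a d n ->
  Rabs (f t - grid_step a d (fun j => f (grid a d j)) n t) <=
    grid_step a d (fun j => f (grid a d (S j)) - f (grid a d j)) n t.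
Proof.
  intros Hd Hn Hf Ht.
  assert (Hg0 : grid a d 0 = a) by (unfold grid; simpl; ring).
  assert (Hcell : exists j, (j < n)%nat /\ grid a d j <= t <= grid a d (S j) /\
                    (forall g, grid_step a d g n t = g j)).
  { destruct n as [|n0]; [lia|]. destruct (Rlt_dec t (grid a d (S n0))) as [Hlt|Hge].
    - destruct (grid_cell a d (S n0) t ltac:(lra)) as [j [Hj Hjt]].
      exists j. repeat split; try lra; [exact Hj|]. intros g; apply grid_step_eq; assumption.
    - assert (grid a d n0 <= t) by (pose proof (grid_le a d Hd n0 (S n0) ltac:(lia)); lra).
      exists n0. repeat split; [lia | assumption | lra |].
      intros g; apply grid_step_last; assumption. }
  destruct Hcell as [j [Hj [Hjt Hstep]]]. rewrite !Hstep.
  pose proof (grid_le a d Hd 0 j ltac:(lia)). pose proof (grid_le a d Hd (S j) n ltac:(lia)).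
  assert (f (grid a d j) <= f t) by (apply Hf; lra).
  assert (f t <= f (grid a d (S j))) by (apply Hf; lra).
  rewrite Rabs_right; lra.
Qed.

(* Riemann's criterion with the uniform grid of [n] cells: the oscillations of [f] on the
   cells telescope to [f b - f a]. *)
Lemma Riemann_integrable_nondecreasing (f : R -> R) a b : a < b ->
  nondecreasing_on f a b -> Riemann_integrable f a b.
Proof.
  intros Hab Hf eps.
  destruct (constructive_indefinite_description _
              (INR_unbounded ((b - a) * (f b - f a) / eps))) as [n0 Hn0].
  set (n := S n0). set (d := (b - a) / INR n).
  assert (Hn : 0 < INR n) by (unfold n; rewrite S_INR; pose proof (pos_INR n0); lra).
  assert (Hd : 0 < d) by (unfold d; apply Rdiv_lt_0_compat; lra).
  assert (Hgn : grid a d n = b) by (unfold grid, d; field; lra).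
  assert (Hg0 : grid a d 0 = a) by (unfold grid; simpl; ring).
  set (osc := fun j => f (grid a d (S j)) - f (grid a d j)).
  destruct (grid_step_SF a d (fun j => f (grid a d j)) Hd n n (le_n _)) as [pr1 _].
  destruct (grid_step_SF a d osc Hd n n (le_n _)) as [pr2 H2].
  revert pr1 pr2 H2; rewrite Hg0, Hgn; intros pr1 pr2 H2.
  exists (mkStepFun pr1), (mkStepFun pr2). split.
  - intros t Ht. rewrite Rmin_left, Rmax_right in Ht by lra.
    apply grid_step_oscillation; [exact Hd | unfold n; lia | rewrite Hgn; exact Hf | lra].
  - assert (Hsum : forall k, sum_lt osc k = f (grid a d k) - f a).
    { induction k; simpl; [rewrite Hg0; ring | rewrite IHk; unfold osc; ring]. }
    cbn [fe]. rewrite H2, Hsum, Hgn.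
    assert (f a <= f b) by (apply Hf; lra).
    assert (INR n0 < INR n) by (apply lt_INR; unfold n; lia).
    destruct eps as [e He]; cbn [pos] in *.
    rewrite Rabs_right by (apply Rle_ge; nra).
    apply Rmult_lt_reg_r with (INR n / e); [apply Rdiv_lt_0_compat; lra|].
    replace (d * (f b - f a) * (INR n / e)) with ((b - a) * (f b - f a) / e)
      by (unfold d; field; lra).
    replace (e * (INR n / e)) with (INR n) by (field; lra). lra.
Qed.

Lemma ex_RInt_nondecreasing (f : R -> R) a b : a <= b -> nondecreasing_on f a b -> ex_RInt f a b.
Proof.
  intros Hab Hf. destruct (Rle_lt_or_eq_dec _ _ Hab) as [Hlt|<-].
  - apply ex_RInt_Reals_1, Riemann_integrable_nondecreasing; assumption.
  - apply ex_RInt_point.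
Qed.

(* Real-valued instances of Coquelicot lemmas: the generic statements over normed modules
   neither unify with nor ring-normalise against goals about [R -> R]. *)
Lemma RInt_correct_R (f : R -> R) a b : ex_RInt f a b -> is_RInt f a b (RInt f a b).
Proof. exact (RInt_correct f a b). Qed.

Lemma is_RInt_FTC (F f : R -> R) a b : a <= b ->
  (forall t, a <= t <= b -> is_derive F t (f t)) ->
  (forall t, a <= t <= b -> continuous f t) -> is_RInt f a b (F b - F a).
Proof.
  intros Hab HF Hf.
  apply (is_RInt_derive F f); rewrite Rmin_left, Rmax_right by lra; assumption.
Qed.

Lemma is_RInt_ext_open (f g : R -> R) a b l : a <= b ->
  (forall t, a < t < b -> f t = g t) -> is_RInt f a b l -> is_RInt g a b l.
Proof.
  intros Hab Hfg. apply is_RInt_ext. rewrite Rmin_left, Rmax_right by lra. exact Hfg.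
Qed.

Lemma ex_RInt_ext_open (f g : R -> R) a b : a <= b ->
  (forall t, a < t < b -> f t = g t) -> ex_RInt f a b -> ex_RInt g a b.
Proof.
  intros Hab Hfg. apply ex_RInt_ext. rewrite Rmin_left, Rmax_right by lra. exact Hfg.
Qed.

Lemma RInt_ext_open (f g : R -> R) a b : a <= b ->
  (forall t, a < t < b -> f t = g t) -> RInt f a b = RInt g a b.
Proof.
  intros Hab Hfg. apply RInt_ext. rewrite Rmin_left, Rmax_right by lra. exact Hfg.
Qed.

Lemma is_RInt_lin (f g : R -> R) a b I J k :
  is_RInt f a b I -> is_RInt g a b J -> is_RInt (fun t => f t + k * g t) a b (I + k * J).
Proof.
  intros Hf Hg. apply (is_RInt_plus f (fun t => k * g t)); [exact Hf|].
  exact (is_RInt_scal g a b k J Hg).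
Qed.

Lemma RInt_le_const (g : R -> R) a b k : a <= b -> ex_RInt g a b ->
  (forall t, a < t < b -> g t <= k) -> RInt g a b <= k * (b - a).
Proof.
  intros Hab Hg Hk.
  replace (k * (b - a)) with (RInt (fun _ => k) a b)
    by (rewrite RInt_const; change ((b - a) * k = k * (b - a)); ring).
  apply RInt_le; [lra | exact Hg | apply ex_RInt_const | exact Hk].
Qed.

Lemma RInt_ge_const (g : R -> R) a b k : a <= b -> ex_RInt g a b ->
  (forall t, a < t < b -> k <= g t) -> k * (b - a) <= RInt g a b.
Proof.
  intros Hab Hg Hk.
  replace (k * (b - a)) with (RInt (fun _ => k) a b)
    by (rewrite RInt_const; change ((b - a) * k = k * (b - a)); ring).
  apply RInt_le; [lra | apply ex_RInt_const | exact Hg | exact Hk].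
Qed.

Lemma RInt_neg_of_tail (g : R -> R) a y b eta : a <= y < b -> 0 < eta -> ex_RInt g a b ->
  (forall t, a <= t <= b -> g t <= 0) -> (forall t, y <= t <= b -> g t <= - eta) ->
  RInt g a b < 0.
Proof.
  intros Hy Heta Hg Hneg Htail.
  assert (Hay : ex_RInt g a y) by (apply (ex_RInt_Chasles_1 g a y b); [lra | exact Hg]).
  assert (Hyb : ex_RInt g y b) by (apply (ex_RInt_Chasles_2 g a y b); [lra | exact Hg]).
  rewrite <- (RInt_Chasles g a y b Hay Hyb).
  assert (RInt g a y <= 0 * (y - a))
    by (apply RInt_le_const; [lra | exact Hay | intros t Ht; apply Hneg; lra]).
  assert (RInt g y b <= - eta * (b - y))
    by (apply RInt_le_const; [lra | exact Hyb | intros t Ht; apply Htail; lra]).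
  change (RInt g a y + RInt g y b < 0). nra.
Qed.

Lemma RInt_mul_ge_of_right_min (g G Q : R -> R) a b : a <= b ->
  is_RInt g a b (G b - G a) -> ex_RInt (fun t => g t * Q t) a b ->
  (forall t, a <= t <= b -> 0 <= g t) -> (forall t, a <= t <= b -> Q b <= Q t) -> 0 <= G a ->
  G b * Q b - G a * Q a <= RInt (fun t => g t * Q t) a b.
Proof.
  intros Hab Hg HgQ Hg0 HQ HGa.
  assert (Hlow : Q b * (G b - G a) <= RInt (fun t => g t * Q t) a b).
  { pose proof (is_RInt_scal g a b (Q b) _ Hg) as HgQb.
    replace (Q b * (G b - G a)) with (RInt (fun t => Q b * g t) a b)
      by exact (is_RInt_unique _ _ _ _ HgQb).
    apply RInt_le; [exact Hab | eexists; exact HgQb | exact HgQ |].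
    intros t Ht.
    rewrite Rmult_comm. apply Rmult_le_compat_l; [apply Hg0 | apply HQ]; lra. }
  assert (G a * Q b <= G a * Q a) by (apply Rmult_le_compat_l; [exact HGa | apply HQ; lra]).
  lra.
Qed.

Lemma Rint_RInt f a b : ex_RInt f a b -> Rint f a b = RInt f a b.
Proof.
  intros H. apply ex_RInt_Reals_0 in H. unfold Rint.
  destruct (excluded_middle_informative _) as [Hi|Hi].
  - symmetry; apply RInt_Reals.
  - exfalso; apply Hi; constructor; exact H.
Qed.

Definition xzeta (t : R) : R := t * zeta t.
Definition dzeta (t : R) : R := t * zeta t ^ 2.
Definition dxzeta (t : R) : R := zeta t + t ^ 2 * zeta t ^ 2.
Definition zeta_prim (t : R) : R := ln ((1 + t) / (1 - t)).

Lemma zeta_pos t : -1 < t < 1 -> 0 < zeta t.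
Proof. intros Ht; unfold zeta. apply Rdiv_lt_0_compat; nra. Qed.

Lemma zeta_ge_2 t : -1 < t < 1 -> 2 <= zeta t.
Proof.
  intros Ht; unfold zeta. apply Rmult_le_reg_r with (1 - t ^ 2); [nra|].
  unfold Rdiv. rewrite Rmult_assoc, Rinv_l by nra. nra.
Qed.

Lemma zeta_lt s t : 0 <= s -> s < t -> t < 1 -> zeta s < zeta t.
Proof.
  intros; unfold zeta, Rdiv. apply Rmult_lt_compat_l; [lra|].
  assert (0 < 1 - t ^ 2) by nra. assert (0 < 1 - s ^ 2) by nra.
  apply Rinv_lt_contravar; [apply Rmult_lt_0_compat; lra | nra].
Qed.

Lemma zeta_nondecreasing a b : 0 <= a -> b < 1 -> nondecreasing_on zeta a b.
Proof.
  intros Ha Hb x y Hx Hxy Hy. destruct (Rle_lt_or_eq_dec _ _ Hxy) as [H|<-]; [|lra].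
  apply Rlt_le, zeta_lt; lra.
Qed.

Lemma dzeta_nondecreasing a b : 0 <= a -> b < 1 -> nondecreasing_on dzeta a b.
Proof.
  intros Ha Hb x y Hx Hxy Hy. unfold dzeta.
  pose proof (zeta_pos x ltac:(lra)). pose proof (zeta_nondecreasing a b Ha Hb x y Hx Hxy Hy).
  apply Rmult_le_compat; try lra; [nra|]. apply pow_incr; lra.
Qed.

Lemma dxzeta_nondecreasing a b : 0 <= a -> b < 1 -> nondecreasing_on dxzeta a b.
Proof.
  intros Ha Hb x y Hx Hxy Hy. unfold dxzeta.
  pose proof (zeta_pos x ltac:(lra)). pose proof (zeta_nondecreasing a b Ha Hb x y Hx Hxy Hy).
  apply Rplus_le_compat; [lra|]. rewrite <- !Rpow_mult_distr. apply pow_incr; nra.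
Qed.

Lemma dzeta_nonneg t : 0 <= t < 1 -> 0 <= dzeta t.
Proof. intros Ht. unfold dzeta. pose proof (pow2_ge_0 (zeta t)). nra. Qed.

Lemma dxzeta_pos t : 0 <= t < 1 -> 0 < dxzeta t.
Proof.
  intros Ht. unfold dxzeta. pose proof (zeta_pos t ltac:(lra)).
  pose proof (pow2_ge_0 (t * zeta t)). rewrite Rpow_mult_distr in *. lra.
Qed.

Lemma is_derive_zeta t : -1 < t < 1 -> is_derive zeta t (dzeta t).
Proof. intros Ht. unfold dzeta, zeta. auto_derive; [nra | field; nra]. Qed.

Lemma is_derive_xzeta t : -1 < t < 1 -> is_derive xzeta t (dxzeta t).
Proof. intros Ht. unfold xzeta, dxzeta, zeta. auto_derive; [nra | field; nra]. Qed.

Lemma is_derive_zeta_prim t : -1 < t < 1 -> is_derive zeta_prim t (zeta t).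
Proof.
  intros Ht. unfold zeta_prim, zeta. auto_derive.
  - split; [lra|]. split; [|exact I]. apply Rdiv_lt_0_compat; lra.
  - field. split; [|lra]. nra.
Qed.

Lemma continuous_zeta t : -1 < t < 1 -> continuous zeta t.
Proof. intros Ht. apply (ex_derive_continuous zeta). eexists. apply is_derive_zeta, Ht. Qed.

Lemma continuous_dzeta t : -1 < t < 1 -> continuous dzeta t.
Proof. intros Ht. apply (ex_derive_continuous dzeta). unfold dzeta, zeta. auto_derive. nra. Qed.

Lemma continuous_dxzeta t : -1 < t < 1 -> continuous dxzeta t.
Proof. intros Ht. apply (ex_derive_continuous dxzeta). unfold dxzeta, zeta. auto_derive. nra. Qed.

Lemma is_RInt_dzeta a b : -1 < a -> a <= b -> b < 1 -> is_RInt dzeta a b (zeta b - zeta a).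
Proof.
  intros. apply is_RInt_FTC; [lra | intros; apply is_derive_zeta | intros; apply continuous_dzeta];
    lra.
Qed.

Lemma is_RInt_dxzeta a b : -1 < a -> a <= b -> b < 1 -> is_RInt dxzeta a b (xzeta b - xzeta a).
Proof.
  intros. apply is_RInt_FTC;
    [lra | intros; apply is_derive_xzeta | intros; apply continuous_dxzeta]; lra.
Qed.

Lemma is_RInt_xzeta_exp L a b : -1 < a -> a <= b -> b < 1 ->
  is_RInt (fun t => (dxzeta t + L * dzeta t) * exp (L * zeta_prim t)) a b
    (xzeta b * exp (L * zeta_prim b) - xzeta a * exp (L * zeta_prim a)).
Proof.
  intros Ha Hab Hb. apply (is_RInt_FTC (fun t => xzeta t * exp (L * zeta_prim t))); [lra | |].
  - intros t Ht. unfold xzeta, dxzeta, dzeta, zeta_prim, zeta. auto_derive.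
    + repeat split; try nra. apply Rdiv_lt_0_compat; lra.
    + change ((1 + t) * / (1 + - t)) with ((1 + t) / (1 - t)). field. split; nra.
  - intros t Ht.
    apply (ex_derive_continuous (fun t => (dxzeta t + L * dzeta t) * exp (L * zeta_prim t))).
    unfold dxzeta, dzeta, zeta_prim, zeta. auto_derive.
    repeat split; try nra. apply Rdiv_lt_0_compat; lra.
Qed.

Lemma dxzeta_sub_dzeta m t : -1 < t < 1 ->
  dxzeta t - m * dzeta t = (t ^ 2 - 2 * m * t + 1) * zeta t ^ 2 / 2.
Proof. intros Ht. unfold dxzeta, dzeta, zeta. field. nra. Qed.

Lemma m0_closed a b : 0 <= a -> a < b -> b < 1 -> m0 a b = (1 + a * b) / (a + b).
Proof.
  intros Ha Hab Hb. pose proof (zeta_lt a b Ha Hab Hb). unfold m0, zeta in *.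
  field. repeat split; nra.
Qed.

Lemma xzeta_sub a b : 0 <= a -> a < b -> b < 1 ->
  xzeta b - xzeta a = m0 a b * (zeta b - zeta a).
Proof.
  intros Ha Hab Hb. pose proof (zeta_lt a b Ha Hab Hb). unfold m0, xzeta. field. lra.
Qed.

Section Kernel.

Variables a b : R.
Hypothesis Ha : 0 <= a.
Hypothesis Hab : a < b.
Hypothesis Hb : b < 1.

Definition kernel (t : R) : R := dxzeta t - m0 a b * dzeta t.

(* [kernel_root < 1 < root'] are the roots of [t^2 - 2 m0 t + 1], which has the sign of
   [kernel] on [(-1, 1)]. *)
Definition kernel_root := m0 a b - sqrt (m0 a b ^ 2 - 1).
Let root' := m0 a b + sqrt (m0 a b ^ 2 - 1).

Lemma m0_gt_1 : 1 < m0 a b.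
Proof.
  rewrite m0_closed by assumption.
  apply Rmult_lt_reg_r with (a + b); [lra|].
  unfold Rdiv. rewrite Rmult_assoc, Rinv_l by lra. nra.
Qed.

Lemma kernel_factor t :
  t ^ 2 - 2 * m0 a b * t + 1 = (t - kernel_root) * (t - root').
Proof.
  pose proof m0_gt_1. unfold kernel_root, root'.
  assert (Hs : sqrt (m0 a b ^ 2 - 1) * sqrt (m0 a b ^ 2 - 1) = m0 a b ^ 2 - 1)
    by (apply sqrt_sqrt; nra).
  nra.
Qed.

Lemma root'_gt_1 : 1 < root'.
Proof. pose proof m0_gt_1. pose proof (sqrt_pos (m0 a b ^ 2 - 1)). unfold root'. lra. Qed.

Lemma kernel_root_between : a < kernel_root < b.
Proof.
  pose proof root'_gt_1.
  assert (Hqa : a ^ 2 - 2 * m0 a b * a + 1 = (b - a) * (1 - a ^ 2) / (a + b))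
    by (rewrite m0_closed by assumption; field; lra).
  assert (Hqb : b ^ 2 - 2 * m0 a b * b + 1 = - ((b - a) * (1 - b ^ 2) / (a + b)))
    by (rewrite m0_closed by assumption; field; lra).
  assert (0 < (b - a) * (1 - a ^ 2) / (a + b))
    by (apply Rdiv_lt_0_compat; [apply Rmult_lt_0_compat|]; nra).
  assert (0 < (b - a) * (1 - b ^ 2) / (a + b))
    by (apply Rdiv_lt_0_compat; [apply Rmult_lt_0_compat|]; nra).
  rewrite kernel_factor in Hqa, Hqb. split; nra.
Qed.

Lemma kernel_nonneg t : 0 <= t <= kernel_root -> 0 <= kernel t.
Proof.
  intros Ht. pose proof root'_gt_1. pose proof kernel_root_between.
  unfold kernel. rewrite dxzeta_sub_dzeta, kernel_factor by lra.
  assert (0 <= (t - kernel_root) * (t - root')) by nra.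
  pose proof (pow2_ge_0 (zeta t)). unfold Rdiv. nra.
Qed.

Lemma kernel_nonpos t : kernel_root <= t <= b -> kernel t <= 0.
Proof.
  intros Ht. pose proof root'_gt_1. pose proof kernel_root_between.
  unfold kernel. rewrite dxzeta_sub_dzeta, kernel_factor by lra.
  assert ((t - kernel_root) * (t - root') <= 0) by nra.
  pose proof (pow2_ge_0 (zeta t)). unfold Rdiv. nra.
Qed.

Lemma kernel_tail_neg y : kernel_root < y ->
  exists kappa, 0 < kappa /\ forall t, y <= t <= b -> kernel t <= - kappa.
Proof.
  intros Hy. pose proof root'_gt_1. pose proof kernel_root_between.
  exists (2 * (y - kernel_root) * (root' - b)). split; [nra|].
  intros t Ht. unfold kernel. rewrite dxzeta_sub_dzeta, kernel_factor by lra.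
  pose proof (zeta_ge_2 t ltac:(lra)).
  assert ((t - kernel_root) * (t - root') <= - ((y - kernel_root) * (root' - b))) by nra.
  assert (4 <= zeta t ^ 2) by nra.
  assert (0 < (y - kernel_root) * (root' - b)) by nra.
  unfold Rdiv. nra.
Qed.

Lemma is_RInt_kernel : is_RInt kernel a b 0.
Proof.
  replace 0 with (xzeta b - xzeta a + - m0 a b * (zeta b - zeta a))
    by (rewrite xzeta_sub by assumption; ring).
  apply (is_RInt_ext_open (fun t => dxzeta t + - m0 a b * dzeta t));
    [lra | intros; unfold kernel; ring |].
  apply is_RInt_lin; [apply is_RInt_dxzeta | apply is_RInt_dzeta]; lra.
Qed.

End Kernel.

Definition psi (rho : R -> R) (a c t : R) : R := exp (c + RInt rho a t).

Section Weight.

Variables (a b c L : R) (rho : R -> R).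
Hypothesis Ha : 0 <= a.
Hypothesis Hab : a < b.
Hypothesis Hb : b < 1.
Hypothesis Hrho_nonneg : forall t, a <= t <= b -> 0 <= rho t.
Hypothesis Hrho_zeta : nondecreasing_on (fun t => rho t / zeta t) a b.
Hypothesis Hlim : forall eps, eps > 0 -> exists delta, delta > 0 /\
  forall t, a <= t < b -> b - t < delta -> Rabs (rho t / zeta t - L) < eps.

Local Notation P := (psi rho a c).

Lemma rho_nondecreasing : nondecreasing_on rho a b.
Proof.
  intros s t Hs Hst Htb.
  pose proof (zeta_pos s ltac:(lra)). pose proof (zeta_pos t ltac:(lra)).
  pose proof (zeta_nondecreasing a b Ha Hb s t Hs Hst Htb).
  pose proof (Hrho_zeta s t Hs Hst Htb).
  assert (0 <= rho s / zeta s) by (apply Rdiv_le_0_compat; [apply Hrho_nonneg | ]; lra).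
  replace (rho s) with (rho s / zeta s * zeta s) by (field; lra).
  replace (rho t) with (rho t / zeta t * zeta t) by (field; lra).
  apply Rmult_le_compat; lra.
Qed.

Lemma ex_RInt_rho s t : a <= s -> s <= t -> t <= b -> ex_RInt rho s t.
Proof.
  intros Hs Hst Ht. apply ex_RInt_nondecreasing; [exact Hst|].
  intros x y Hx Hxy Hy. apply rho_nondecreasing; lra.
Qed.

Lemma RInt_rho_Chasles s t : a <= s -> s <= t -> t <= b ->
  RInt rho a s + RInt rho s t = RInt rho a t.
Proof. intros Hs Hst Ht. apply (RInt_Chasles rho); apply ex_RInt_rho; lra. Qed.

Lemma psi_shift s t : a <= s -> s <= t -> t <= b -> P t = P s * exp (RInt rho s t).
Proof.
  intros Hs Hst Ht. unfold psi. rewrite <- exp_plus, <- (RInt_rho_Chasles s t) by assumption.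
  f_equal; ring.
Qed.

Lemma psi_nondecreasing : nondecreasing_on P a b.
Proof.
  intros s t Hs Hst Ht. rewrite (psi_shift s t Hs Hst Ht).
  assert (0 <= RInt rho s t).
  { apply RInt_ge_0; [exact Hst | apply ex_RInt_rho; lra | intros; apply Hrho_nonneg; lra]. }
  pose proof (exp_pos (c + RInt rho a s)).
  pose proof (exp_ineq1_le (RInt rho s t)). unfold psi in *. nra.
Qed.

Lemma psi_lt t0 s t : a <= t0 -> t0 <= s -> s < t -> t <= b -> 0 < rho t0 -> P s < P t.
Proof.
  intros Ht0 Hs Hst Ht Hr0. rewrite (psi_shift s t) by lra.
  assert (rho t0 * (t - s) <= RInt rho s t).
  { apply RInt_ge_const; [lra | apply ex_RInt_rho; lra |].
    intros x Hx. apply rho_nondecreasing; lra. }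
  assert (0 < rho t0 * (t - s)) by (apply Rmult_lt_0_compat; lra).
  pose proof (exp_ineq1_le (RInt rho s t)).
  pose proof (exp_pos (c + RInt rho a s)). unfold psi. nra.
Qed.

(* If [rho t > L zeta t], monotonicity of [rho / zeta] keeps it above [L] up to [b]. *)
Lemma rho_le_L t : a <= t < b -> rho t <= L * zeta t.
Proof.
  intros Ht. pose proof (zeta_pos t ltac:(lra)).
  apply Rnot_lt_le; intro Hlt.
  assert (Hgap : L < rho t / zeta t).
  { apply Rmult_lt_reg_r with (zeta t); [lra|].
    replace (rho t / zeta t * zeta t) with (rho t) by (field; lra). lra. }
  destruct (Hlim (rho t / zeta t - L) ltac:(lra)) as [d [Hd Hnear]].
  set (s := Rmax t (b - d / 2)).
  assert (t <= s /\ b - d / 2 <= s /\ s < b) by (unfold s, Rmax; destruct (Rle_dec t _); lra).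
  specialize (Hnear s ltac:(lra) ltac:(lra)). apply Rabs_lt_between in Hnear.
  pose proof (Hrho_zeta t s ltac:(lra) ltac:(lra) ltac:(lra)). lra.
Qed.

Lemma L_nonneg : 0 <= L.
Proof.
  pose proof (rho_le_L a ltac:(lra)). pose proof (Hrho_nonneg a ltac:(lra)).
  pose proof (zeta_pos a ltac:(lra)). nra.
Qed.

Lemma ex_RInt_mul_psi f : nondecreasing_on f a b -> (forall t, a <= t <= b -> 0 <= f t) ->
  ex_RInt (fun t => f t * P t) a b.
Proof.
  intros Hf Hf0. apply ex_RInt_nondecreasing; [lra|].
  intros x y Hx Hxy Hy. apply Rmult_le_compat.
  - apply Hf0; lra.
  - apply Rlt_le, exp_pos.
  - apply Hf; assumption.
  - apply psi_nondecreasing; assumption.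
Qed.

Lemma ex_RInt_dxzeta_psi : ex_RInt (fun t => dxzeta t * P t) a b.
Proof.
  apply ex_RInt_mul_psi; [apply dxzeta_nondecreasing; lra | intros; apply Rlt_le, dxzeta_pos; lra].
Qed.

Lemma ex_RInt_dzeta_psi : ex_RInt (fun t => dzeta t * P t) a b.
Proof.
  apply ex_RInt_mul_psi; [apply dzeta_nondecreasing; lra | intros; apply dzeta_nonneg; lra].
Qed.

Local Notation A := (RInt (fun t => dxzeta t * P t) a b).
Local Notation D := (RInt (fun t => dzeta t * P t) a b).
Local Notation x0 := (kernel_root a b).

Lemma is_RInt_dxzeta_L_dzeta_psi :
  is_RInt (fun t => (dxzeta t + L * dzeta t) * P t) a b (A + L * D).
Proof.
  apply (is_RInt_ext_open (fun t => dxzeta t * P t + L * (dzeta t * P t))); [lra | intros; ring |].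
  apply is_RInt_lin; apply RInt_correct_R; [exact ex_RInt_dxzeta_psi | exact ex_RInt_dzeta_psi].
Qed.

Lemma RInt_rho_le_zeta_prim s t : a <= s -> s <= t -> t <= b ->
  RInt rho s t <= L * (zeta_prim t - zeta_prim s).
Proof.
  intros Hs Hst Ht.
  assert (HZ : is_RInt (fun x => L * zeta x) s t (L * (zeta_prim t - zeta_prim s))).
  { apply (is_RInt_scal zeta), is_RInt_FTC;
      [lra | intros; apply is_derive_zeta_prim | intros; apply continuous_zeta]; lra. }
  rewrite <- (is_RInt_unique _ _ _ _ HZ).
  apply RInt_le; [lra | apply ex_RInt_rho; lra | eexists; exact HZ |].
  intros x Hx. apply rho_le_L; lra.
Qed.

Lemma psi_exp_zeta_prim_min t : a <= t <= b ->
  P b * exp (- (L * zeta_prim b)) <= P t * exp (- (L * zeta_prim t)).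
Proof.
  intros Ht. pose proof (RInt_rho_le_zeta_prim t b ltac:(lra) ltac:(lra) ltac:(lra)).
  rewrite (psi_shift t b) by lra. unfold psi. rewrite <- !exp_plus.
  apply Rnot_lt_le; intro Hlt; apply exp_lt_inv in Hlt. lra.
Qed.

(* Write [psi = exp (L zeta_prim) * Q] with [Q] minimal at [b] and differentiate the
   smooth factor together with [xzeta]. *)
Lemma xzeta_psi_le_add_L : xzeta b * P b - xzeta a * P a <= A + L * D.
Proof.
  set (E := fun t => exp (L * zeta_prim t)).
  set (Q := fun t => P t * exp (- (L * zeta_prim t))).
  assert (HPEQ : forall t, P t = E t * Q t).
  { intros t. unfold E, Q. rewrite Rmult_comm, Rmult_assoc, <- exp_plus, Rplus_opp_l, exp_0.
    ring. }
  rewrite <- (is_RInt_unique _ _ _ _ is_RInt_dxzeta_L_dzeta_psi).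
  rewrite (RInt_ext_open _ (fun t => (dxzeta t + L * dzeta t) * E t * Q t)) by
    (lra || (intros; rewrite HPEQ; ring)).
  replace (xzeta b * P b - xzeta a * P a) with
    (xzeta b * E b * Q b - xzeta a * E a * Q a) by (rewrite !HPEQ; ring).
  apply (RInt_mul_ge_of_right_min _ (fun t => xzeta t * E t));
    [lra | apply is_RInt_xzeta_exp; lra | | | exact psi_exp_zeta_prim_min |].
  - eexists. apply (is_RInt_ext_open (fun t => (dxzeta t + L * dzeta t) * P t));
      [lra | intros; rewrite HPEQ; ring | exact is_RInt_dxzeta_L_dzeta_psi].
  - intros t Ht. pose proof L_nonneg.
    pose proof (dxzeta_pos t ltac:(lra)). pose proof (dzeta_nonneg t ltac:(lra)).
    apply Rmult_le_pos; [nra | apply Rlt_le, exp_pos].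
  - pose proof (zeta_pos a ltac:(lra)).
    apply Rmult_le_pos; [unfold xzeta; nra | apply Rlt_le, exp_pos].
Qed.

(* [kernel] has integral zero, so [P] may be shifted by its value at the sign change [x0]. *)
Lemma is_RInt_kernel_psi :
  is_RInt (fun t => kernel a b t * (P t - P x0)) a b (A - m0 a b * D).
Proof.
  replace (A - m0 a b * D) with (A + - m0 a b * D + - P x0 * 0) by ring.
  apply (is_RInt_ext_open
           (fun t => dxzeta t * P t + - m0 a b * (dzeta t * P t) +
                     - P x0 * kernel a b t)); [lra | intros; unfold kernel; ring |].
  apply is_RInt_lin; [apply is_RInt_lin; apply RInt_correct_R | apply is_RInt_kernel; assumption].
  - exact ex_RInt_dxzeta_psi.
  - exact ex_RInt_dzeta_psi.
Qed.

Lemma kernel_psi_nonpos t : a <= t <= b ->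
  kernel a b t * (P t - P x0) <= 0.
Proof.
  intros Ht. pose proof (kernel_root_between a b Ha Hab Hb).
  destruct (Rle_dec t x0).
  - pose proof (kernel_nonneg a b Ha Hab Hb t ltac:(lra)).
    pose proof (psi_nondecreasing t x0 ltac:(lra) ltac:(lra) ltac:(lra)). nra.
  - pose proof (kernel_nonpos a b Ha Hab Hb t ltac:(lra)).
    pose proof (psi_nondecreasing x0 t ltac:(lra) ltac:(lra) ltac:(lra)). nra.
Qed.

Lemma RInt_kernel_psi_nonpos : A - m0 a b * D <= 0.
Proof.
  rewrite <- (is_RInt_unique _ _ _ _ is_RInt_kernel_psi).
  replace 0 with (0 * (b - a)) by ring.
  apply RInt_le_const; [lra | eexists; exact is_RInt_kernel_psi |].
  intros t Ht. apply kernel_psi_nonpos; lra.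
Qed.

(* Beyond [max t0 x0] the weight [P] strictly exceeds [P x0] while the kernel stays
   negative. *)
Lemma RInt_kernel_psi_neg t0 : a <= t0 < b -> 0 < rho t0 -> A - m0 a b * D < 0.
Proof.
  intros Ht0 Hr0. pose proof (kernel_root_between a b Ha Hab Hb).
  set (s := Rmax t0 x0). set (y := (s + b) / 2).
  assert (t0 <= s /\ x0 <= s /\ s < b) by (unfold s, Rmax; destruct (Rle_dec t0 x0); lra).
  destruct (kernel_tail_neg a b Ha Hab Hb y ltac:(unfold y; lra)) as [kappa [Hk Htail]].
  assert (Hgap : P x0 < P y).
  { apply Rle_lt_trans with (P s); [apply psi_nondecreasing; lra |].
    apply (psi_lt t0); unfold y; lra. }
  rewrite <- (is_RInt_unique _ _ _ _ is_RInt_kernel_psi).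
  apply (RInt_neg_of_tail _ a y b (kappa * (P y - P x0)));
    [unfold y; lra | nra | eexists; exact is_RInt_kernel_psi | apply kernel_psi_nonpos |].
  intros t Ht. pose proof (Htail t Ht).
  pose proof (psi_nondecreasing y t ltac:(unfold y; lra) ltac:(lra) ltac:(lra)). nra.
Qed.

Lemma RInt_dzeta_psi_pos : 0 < D.
Proof.
  pose proof (is_RInt_scal _ _ _ (P a) _ (is_RInt_dzeta a b ltac:(lra) ltac:(lra) Hb)) as Hlow.
  apply Rlt_le_trans with (P a * (zeta b - zeta a)).
  - apply Rmult_lt_0_compat; [apply exp_pos | pose proof (zeta_lt a b Ha Hab Hb); lra].
  - replace (P a * (zeta b - zeta a)) with (RInt (fun t => P a * dzeta t) a b)
      by exact (is_RInt_unique _ _ _ _ Hlow).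
    apply RInt_le; [lra | eexists; exact Hlow | exact ex_RInt_dzeta_psi |].
    intros t Ht. rewrite Rmult_comm.
    apply Rmult_le_compat_l; [apply dzeta_nonneg; lra | apply psi_nondecreasing; lra].
Qed.

Lemma xzeta_psi_le : xzeta b * P b - xzeta a * P a <= (L + m0 a b) * D.
Proof.
  pose proof xzeta_psi_le_add_L. pose proof RInt_kernel_psi_nonpos. lra.
Qed.

Lemma xzeta_psi_lt t0 : a <= t0 < b -> 0 < rho t0 ->
  xzeta b * P b - xzeta a * P a < (L + m0 a b) * D.
Proof.
  intros Ht0 Hr0. pose proof xzeta_psi_le_add_L. pose proof (RInt_kernel_psi_neg t0 Ht0 Hr0).
  lra.
Qed.

Lemma L_eq_0_of_rho_zero : (forall t, a <= t < b -> rho t = 0) -> L = 0.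
Proof.
  intros H0. destruct (Req_dec L 0) as [E|E]; [exact E | exfalso].
  destruct (Hlim (Rabs L) ltac:(apply Rabs_pos_lt; exact E)) as [d [Hd Hnear]].
  set (t := Rmax a (b - d / 2)).
  assert (a <= t < b /\ b - t < d) by (unfold t, Rmax; destruct (Rle_dec a (b - d / 2)); lra).
  specialize (Hnear t ltac:(lra) ltac:(lra)). rewrite H0 in Hnear by lra.
  unfold Rdiv in Hnear. rewrite Rmult_0_l, Rminus_0_l, Rabs_Ropp in Hnear. lra.
Qed.

Lemma xzeta_psi_eq_of_rho_zero : (forall t, a <= t < b -> rho t = 0) ->
  xzeta b * P b - xzeta a * P a = (L + m0 a b) * D.
Proof.
  intros H0. rewrite (L_eq_0_of_rho_zero H0).
  assert (HP : forall t, a <= t <= b -> P t = exp c).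
  { intros t Ht. unfold psi. enough (RInt rho a t = 0) as -> by (f_equal; ring).
    apply Rle_antisym.
    - replace 0 with (0 * (t - a)) by ring.
      apply RInt_le_const; [lra | apply ex_RInt_rho; lra | intros; rewrite H0; lra].
    - replace 0 with (0 * (t - a)) by ring.
      apply RInt_ge_const; [lra | apply ex_RInt_rho; lra | intros; rewrite H0; lra]. }
  pose proof (is_RInt_scal _ _ _ (exp c) _ (is_RInt_dzeta a b ltac:(lra) ltac:(lra) Hb)) as HD.
  rewrite (RInt_ext_open _ (fun t => exp c * dzeta t))
    by (lra || (intros; rewrite HP by lra; ring)).
  replace (RInt (fun t => exp c * dzeta t) a b) with (exp c * (zeta b - zeta a))
    by (symmetry; exact (is_RInt_unique _ _ _ _ HD)).
  rewrite !HP by lra.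
  replace (xzeta b * exp c - xzeta a * exp c) with (exp c * (xzeta b - xzeta a)) by ring.
  rewrite xzeta_sub by assumption. ring.
Qed.

Lemma m_rho_psi h : (forall x, a <= x <= b -> h x = c + Rint rho a x) ->
  m_rho h a b = (xzeta b * P b - xzeta a * P a) / D.
Proof.
  intros Hprim.
  assert (Hh : forall x, a <= x <= b -> exp (h x) = P x).
  { intros x Hx. rewrite Hprim, Rint_RInt by (assumption || (apply ex_RInt_rho; lra)).
    reflexivity. }
  unfold m_rho, xzeta. cbv beta zeta. rewrite !Hh by lra. f_equal.
  rewrite Rint_RInt.
  - apply RInt_ext_open; [lra|]. intros t Ht. rewrite Hh by lra. reflexivity.
  - apply (ex_RInt_ext_open (fun t => dzeta t * P t));
      [lra | intros; rewrite Hh by lra; reflexivity | exact ex_RInt_dzeta_psi].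
Qed.

End Weight.

Theorem mainTheorem9 (a b : R) (rho h : R -> R) (c L : R)
  (Hab : 0 <= a /\ a < b /\ b < 1)
  (Hnonneg : forall t, a <= t <= b -> 0 <= rho t)
  (Hbdd : exists M, forall t, a <= t <= b -> Rabs (rho t) <= M)
  (Hmono : forall s t, a <= s -> s <= t -> t <= b ->
             rho s / zeta s <= rho t / zeta t)
  (Hprim : forall x, a <= x <= b -> h x = c + Rint rho a x)
  (HL : forall eps, eps > 0 -> exists delta, delta > 0 /\
          forall t, a <= t < b -> b - t < delta ->
            Rabs (rho t / zeta t - L) < eps) :
  m_rho h a b <= L + m0 a b /\
  (m_rho h a b = L + m0 a b <-> forall t, a <= t < b -> rho t = 0).
Proof.
  destruct Hab as [Ha [Hab Hb]].
  erewrite m_rho_psi by eassumption.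
  set (D := RInt (fun t => dzeta t * psi rho a c t) a b).
  set (N := xzeta b * psi rho a c b - xzeta a * psi rho a c a).
  assert (HD : 0 < D) by (eapply RInt_dzeta_psi_pos; eassumption).
  split; [|split].
  - apply Rle_div_l; [exact HD|]. eapply xzeta_psi_le; eassumption.
  - intros Heq t Ht. destruct (Rle_lt_dec (rho t) 0) as [Hle|Hlt].
    + pose proof (Hnonneg t ltac:(lra)). lra.
    + enough (N < N) by lra.
      replace N with (N / D * D) at 2 by (field; lra). rewrite Heq.
      eapply xzeta_psi_lt; eassumption.
  - intros H0. unfold N. erewrite xzeta_psi_eq_of_rho_zero by eassumption. fold D. field. lra.
Qed.
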